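(* Let $\mathcal A$ and $\mathcal B$ be complete NFAs over the same finite alphabet $\Sigma$. Then $\mathcal L(\mathcal B)\subseteq\mathcal L(\mathcal A)$ if and only if $\mathcal L(\mathcal B_f)\subseteq\mathcal L(\mathcal A_f)$, where $\mathcal A_f,\mathcal B_f$ are the NBWs obtained by the construction below.
   Context: An NFA $\mathcal A=(\Sigma,Q,q_0,\delta,F)$ (with $\delta:Q\times\Sigma\to 2^Q$) is complete if $\delta(q,\sigma)\neq\emptyset$ for all $q,\sigma$; $\mathcal L(\mathcal A)\subseteq\Sigma^*$ is its language of finite words. An NBW is the same kind of tuple read on infinite words, accepting a word if some run visits a final state infinitely often. For a complete NFA $\mathcal A=(\Sigma,Q,q_0,\delta,F)$, the NBW $\mathcal A_f=(\Sigma_\$,Q\cup\{f\},q_0,\delta_f,\{f\})$ is defined with a fresh letter $\$\notin\Sigma$, $\Sigma_\$=\Sigma\cup\{\$\}$, a fresh state $f\notin Q$, and: $\delta_f(q,\sigma)=\delta(q,\sigma)$ for $q\in Q,\sigma\in\Sigma$; $\delta_f(q,\$)=\{f\}$ for $q\in F$; $\delta_f(q,\$)=\{q_0\}$ for $q\in Q\setminus F$; and $\delta_f(f,\sigma)=\delta_f(q_0,\sigma)$ for all $\sigma\in\Sigma_\$$. *)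

From mathcomp Require Import all_boot.
Set Implicit Arguments. Unset Strict Implicit. Unset Printing Implicit Defensive.

Record automaton (Sigma Q : finType) := Automaton {
  init  : Q;
  delta : Q -> Sigma -> {set Q};
  final : {set Q}
}.

Definition complete (Sigma Q : finType) (A : automaton Sigma Q) : Prop :=
  forall (q : Q) (a : Sigma), delta A q a != set0.

(* Finite-word acceptance: a run q0 = init, q1, ..., qn on w = a1 ... an,
   given as the sequence rs = [q1; ...; qn] of successor states, with
   q_i \in delta q_(i-1) a_i and q_n final (q_n = last init rs). *)
Fixpoint run_ok (Sigma Q : finType) (A : automaton Sigma Q)
    (q : Q) (w : seq Sigma) (rs : seq Q) : bool :=
  match w, rs with
  | [::], [::] => true
  | a :: w', q' :: rs' => (q' \in delta A q a) && run_ok A q' w' rs'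
  | _, _ => false
  end.

Definition nfa_accepts (Sigma Q : finType) (A : automaton Sigma Q) (w : seq Sigma) : Prop :=
  exists rs : seq Q, run_ok A (init A) w rs && (last (init A) rs \in final A).

Definition nfa_incl (Sigma Q P : finType) (B : automaton Sigma P) (A : automaton Sigma Q) : Prop :=
  forall w : seq Sigma, nfa_accepts B w -> nfa_accepts A w.

Definition nbw_accepts (Sigma Q : finType) (A : automaton Sigma Q) (w : nat -> Sigma) : Prop :=
  exists r : nat -> Q,
    r 0 = init A /\
    (forall i, r i.+1 \in delta A (r i) (w i)) /\
    (forall n, exists2 i, n <= i & r i \in final A).

Definition nbw_incl (Sigma Q P : finType) (B : automaton Sigma P) (A : automaton Sigma Q) : Prop :=
  forall w : nat -> Sigma, nbw_accepts B w -> nbw_accepts A w.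

(* The construction A_f: alphabet Sigma_$ = option Sigma (None = $),
   states Q \cup {f} = option Q (None = f), initial q0, final {f}. *)
Definition delta_f (Sigma Q : finType) (A : automaton Sigma Q)
    (q : option Q) (a : option Sigma) : {set option Q} :=
  let q' := match q with Some q => q | None => init A end in
  match a with
  | Some s => [set Some x | x in delta A q' s]
  | None => if q' \in final A then [set None] else [set Some (init A)]
  end.

Definition Af (Sigma Q : finType) (A : automaton Sigma Q) : automaton (option Sigma) (option Q) :=
  Automaton (Some (init A)) (delta_f A) [set None].

From mathcomp Require Import all_boot.
Set Implicit Arguments. Unset Strict Implicit. Unset Printing Implicit Defensive.

(* After a $ the automaton A_f is in q0 or in f, and these two states behave
   identically, so A_f reads the $-separated blocks of an infinite word one
   by one with A, restarting from q0 each time, and it enters f exactly after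
   a block accepted by A.  Hence w is accepted by A_f iff infinitely many
   $-terminated blocks of w lie in L(A).  For the converse construction the
   run of A_f looks ahead to the next $ and follows an accepting run of A on
   the block if there is one; completeness of A guarantees that rejected
   blocks can be traversed as well.  Inclusion of finite-word languages thus
   transfers to the NBWs, and conversely a word u of L(B) yields the word
   (u$)^omega of L(B_f), all of whose blocks are u. *)

Definition infinitely_often (P : nat -> Prop) : Prop :=
  forall n, exists2 i, n <= i & P i.

Lemma infinitely_often_sub (P P' : nat -> Prop) :
  (forall i, P i -> P' i) -> infinitely_often P -> infinitely_often P'.
Proof. by move=> PP' P_io n; have [i le_ni /PP'] := P_io n; exists i. Qed.

Fixpoint block (Sigma : Type) (w : nat -> option Sigma) (i : nat) : seq Sigma :=
  if i is i'.+1 then (if w i' is Some a then rcons (block w i') a else [::])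
  else [::].

Lemma block_cat (Sigma : Type) (w : nat -> option Sigma) t e :
  t <= e -> (forall i, t <= i < e -> w i <> None) ->
  exists v, block w e = block w t ++ v.
Proof.
elim: e => [|e IHe]; first by rewrite leqn0 => /eqP-> _; exists [::]; rewrite cats0.
rewrite leq_eqVlt => /predU1P[<- _|le_te no_dollar]; first by exists [::]; rewrite cats0.
have [|v block_e] := IHe le_te.
  by move=> i /andP[le_ti lt_ie]; apply: no_dollar; rewrite le_ti ltnW.
have : w e <> None by apply: no_dollar; rewrite ltnSn andbT.
rewrite /=; case: (w e) => [a _|//].
by exists (rcons v a); rewrite block_e rcons_cat.
Qed.

Section Runs.
Variables (Sigma Q : finType) (A : automaton Sigma Q).

Lemma run_ok_size q u rs : run_ok A q u rs -> size rs = size u.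
Proof.
by elim: u q rs => [|a u IHu] q [|q' rs] //= /andP[_ /IHu->].
Qed.

Lemma run_ok_rcons q u rs a y :
  run_ok A q u rs -> y \in delta A (last q rs) a ->
  run_ok A q (rcons u a) (rcons rs y).
Proof.
elim: u q rs => [|b u IHu] q [|q' rs] //=; first by rewrite andbT.
by case/andP=> -> /IHu.
Qed.

Lemma run_ok_nth q u rs a0 k :
  run_ok A q u rs -> k < size u ->
  nth q rs k \in delta A (nth q (q :: rs) k) (nth a0 u k).
Proof.
elim: u q rs k => [|a u IHu] q [|q' rs] [|k] //= /andP[q'_next ok] lt_ku //.
have lt_k : k < size rs by rewrite (run_ok_size ok).
rewrite (set_nth_default q' q lt_k) (@set_nth_default _ (q' :: rs) q' q k (leqW lt_k)).
by rewrite IHu // -ltnS.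
Qed.

Lemma run_ok_exists : complete A -> forall q u, exists rs, run_ok A q u rs.
Proof.
move=> A_complete q u; elim: u q => [|a u IHu] q; first by exists [::].
have /set0Pn[q' q'_next] := A_complete q a.
by have [rs ok] := IHu q'; exists (q' :: rs); rewrite /= q'_next.
Qed.

Lemma delta_f_letter q a :
  delta_f A q (Some a) = [set Some x | x in delta A (odflt (init A) q) a].
Proof. by case: q. Qed.

Lemma delta_f_dollar q :
  delta_f A q None =
  [set if odflt (init A) q \in final A then None else Some (init A)].
Proof. by rewrite /delta_f; case: q => [q|] /=; case: ifP. Qed.

Lemma mem_delta_f_letter q a x :
  (x \in delta_f A q (Some a)) =
  if x is Some y then y \in delta A (odflt (init A) q) a else false.
Proof.
rewrite delta_f_letter; case: x => [y|]; first by rewrite mem_imset //; exact: Some_inj.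
by apply/negbTE/imsetP => -[].
Qed.

End Runs.

Section AfAcceptance.
Variables (Sigma Q : finType) (A : automaton Sigma Q).

Lemma Af_run_block (w : nat -> option Sigma) (r : nat -> option Q) :
  r 0 = Some (init A) -> (forall i, r i.+1 \in delta_f A (r i) (w i)) ->
  forall i, exists rs,
    run_ok A (init A) (block w i) rs /\ last (init A) rs = odflt (init A) (r i).
Proof.
move=> r0 r_next; elim=> [|i [rs [ok last_rs]]]; first by exists [::]; rewrite r0.
have /= := r_next i; case: (w i) => [a|].
- rewrite mem_delta_f_letter; case: (r i.+1) => [y|//] y_next.
  by exists (rcons rs y); rewrite last_rcons (run_ok_rcons ok) ?last_rs.
- by rewrite delta_f_dollar in_set1 => /eqP->; exists [::]; case: ifP.
Qed.

Lemma Af_accepts_blocks (w : nat -> option Sigma) :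
  nbw_accepts (Af A) w ->
  infinitely_often (fun i => w i = None /\ nfa_accepts A (block w i)).
Proof.
case=> r [r0 [r_next r_final]] n.
have [[|i] lt_ni] := r_final n.+1 => //; rewrite in_set1 => /eqP r_f.
exists i => //; have /= := r_next i; rewrite r_f.
case: (w i) => [a|]; first by rewrite mem_delta_f_letter.
rewrite delta_f_dollar in_set1; case: ifP => // r_i_final _.
have [rs [ok last_rs]] := Af_run_block r0 r_next i.
by split=> //; exists rs; rewrite ok last_rs r_i_final.
Qed.

Hypothesis A_complete : complete A.

Definition best_run (u : seq Sigma) : seq Q :=
  let is_run (rs : (size u).-tuple Q) := run_ok A (init A) u rs in
  if [pick rs | is_run rs && (last (init A) rs \in final A)] is Some rs then val rs
  else if [pick rs | is_run rs] is Some rs then val rs else [::].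

Lemma run_ok_best_run u : run_ok A (init A) u (best_run u).
Proof.
rewrite /best_run; case: pickP => [rs /andP[] //|_]; case: pickP => [rs //|no_run].
have [rs ok] := run_ok_exists A_complete (init A) u.
by have /= := no_run (Tuple (introT eqP (run_ok_size ok))); rewrite ok.
Qed.

Lemma best_run_final u : nfa_accepts A u -> last (init A) (best_run u) \in final A.
Proof.
case=> rs /andP[ok rs_final]; rewrite /best_run.
case: pickP => [? /andP[] //|no_acc_run].
by have /= := no_acc_run (Tuple (introT eqP (run_ok_size ok))); rewrite ok rs_final.
Qed.

Variable w : nat -> option Sigma.
Hypothesis accepted_blocks :
  infinitely_often (fun i => w i = None /\ nfa_accepts A (block w i)).

Lemma dollar_after t : exists i, (t <= i) && (w i == None).
Proof. by have [i le_ti [/eqP w_i _]] := accepted_blocks t; exists i; rewrite le_ti. Qed.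

Definition next_dollar t : nat := ex_minn (dollar_after t).

Lemma next_dollar_ge t : t <= next_dollar t.
Proof. by rewrite /next_dollar; case: ex_minnP => m /andP[]. Qed.

Lemma next_dollar_None t : w (next_dollar t) = None.
Proof. by rewrite /next_dollar; case: ex_minnP => m /andP[_ /eqP]. Qed.

Lemma before_next_dollar t i : t <= i < next_dollar t -> w i <> None.
Proof.
rewrite /next_dollar; case: ex_minnP => m _ min_m /andP[le_ti lt_im] w_i.
by have := min_m i; rewrite le_ti w_i leqNgt lt_im => /(_ isT).
Qed.

Lemma next_dollar_id t : w t = None -> next_dollar t = t.
Proof.
move=> w_t; apply/eqP; rewrite eqn_leq next_dollar_ge andbT leqNgt.
by apply/negP => lt_t; apply: (@before_next_dollar t t); rewrite ?leqnn.
Qed.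

Lemma next_dollarS t a : w t = Some a -> next_dollar t.+1 = next_dollar t.
Proof.
move=> w_t; rewrite /next_dollar.
case: ex_minnP => m1 /andP[le_t1 /eqP w_m1] min_m1.
case: ex_minnP => m2 /andP[le_t2 /eqP w_m2] min_m2.
apply/eqP; rewrite eqn_leq min_m2 ?(ltnW le_t1) ?w_m1 // min_m1 ?w_m2 ?andbT //.
by rewrite ltn_neqAle le_t2 andbT; apply/eqP => t_m2; rewrite -t_m2 w_t in w_m2.
Qed.

Definition after_dollar t : option Q :=
  if last (init A) (best_run (block w t)) \in final A then None else Some (init A).

(* Position t is the (size (block w t))-th letter of the block ending at
   next_dollar t; at offset 0 the state is f or q0, as decided by the
   preceding block. *)
Definition block_run t : option Q :=
  if size (block w t) is k.+1 then
    Some (nth (init A) (best_run (block w (next_dollar t))) k)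
  else if t is t'.+1 then after_dollar t' else Some (init A).

Lemma odflt_block_run t :
  odflt (init A) (block_run t) =
  nth (init A) (init A :: best_run (block w (next_dollar t))) (size (block w t)).
Proof.
rewrite /block_run /after_dollar; case: (size _) => [|k] //.
by case: t => [|t] //=; case: ifP.
Qed.

Lemma block_run_letter t a :
  w t = Some a -> block_run t.+1 \in delta_f A (block_run t) (Some a).
Proof.
move=> w_t; rewrite mem_delta_f_letter odflt_block_run /block_run /= w_t.
rewrite size_rcons (next_dollarS w_t).
have lt_t : t < next_dollar t.
  rewrite ltn_neqAle next_dollar_ge andbT.
  by apply/eqP => t_e; have := next_dollar_None t; rewrite -t_e w_t.
have [v block_e] : exists v, block w (next_dollar t) = block w t.+1 ++ v.
  apply: block_cat => // i /andP[lt_ti lt_i]; apply: (@before_next_dollar t).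
  by rewrite lt_i (ltnW lt_ti).
rewrite /= w_t cat_rcons in block_e.
have := run_ok_nth a (k := size (block w t)) (run_ok_best_run (block w (next_dollar t))).
rewrite block_e nth_cat ltnn subnn size_cat /= addnS ltnS leq_addr.
by apply.
Qed.

Lemma block_run_dollar t :
  w t = None -> block_run t.+1 \in delta_f A (block_run t) None.
Proof.
move=> w_t; rewrite delta_f_dollar in_set1 odflt_block_run (next_dollar_id w_t).
rewrite -(run_ok_size (run_ok_best_run (block w t))).
have := nth_last (init A) (init A :: best_run (block w t)) => /= ->.
by rewrite /block_run /= w_t.
Qed.

Lemma blocks_Af_accepts : nbw_accepts (Af A) w.
Proof.
exists block_run; split=> //; split=> [t|n].
  by case w_t: (w t) => [a|]; [apply: block_run_letter | apply: block_run_dollar].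
have [i le_ni [w_i i_acc]] := accepted_blocks n.
exists i.+1; first exact: leqW.
by rewrite /block_run /= w_i /after_dollar best_run_final ?in_set1.
Qed.

End AfAcceptance.

Lemma modSnS i n : i.+1 %% n.+1 = if i %% n.+1 == n then 0 else (i %% n.+1).+1.
Proof.
rewrite {1}(divn_eq i n.+1) -addnS modnMDl; case: ifP => [/eqP->|ne_n]; first exact: modnn.
by apply: modn_small; rewrite ltnS ltn_neqAle ne_n -ltnS ltn_pmod.
Qed.

(* The infinite word (u$)^omega, with $ encoded as None. *)
Definition dollar_cycle (Sigma : Type) (u : seq Sigma) (i : nat) : option Sigma :=
  onth u (i %% (size u).+1).

Section DollarCycle.
Variables (Sigma : Type) (u : seq Sigma).

Lemma block_dollar_cycle i : block (dollar_cycle u) i = take (i %% (size u).+1) u.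
Proof.
elim: i => [|i IHi]; first by rewrite mod0n take0.
rewrite /= IHi /dollar_cycle modSnS; case u_i: (onth u _) => [a|].
  have lt_iu : i %% (size u).+1 < size u by rewrite -onthTE u_i.
  by rewrite (ltn_eqF lt_iu) (take_nth a lt_iu) -odflt_onth u_i.
have ge_iu : size u <= i %% (size u).+1 by rewrite -onthNE u_i.
have -> : i %% (size u).+1 = size u by apply/eqP; rewrite eqn_leq ge_iu -ltnS ltn_pmod.
by rewrite eqxx take0.
Qed.

Lemma dollar_cycle_block i : dollar_cycle u i = None -> block (dollar_cycle u) i = u.
Proof.
move=> u_i; rewrite block_dollar_cycle take_oversize //.
by rewrite -onthNE; move: u_i; rewrite /dollar_cycle => ->.
Qed.

Lemma dollar_cycle_dollars : infinitely_often (fun i => dollar_cycle u i = None).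
Proof.
move=> n; exists (n * (size u).+1 + size u).
  exact: leq_trans (leq_pmulr n (ltn0Sn _)) (leq_addr _ _).
by rewrite /dollar_cycle modnMDl modn_small // onth_default.
Qed.

End DollarCycle.

Lemma Af_acceptsE (Sigma Q : finType) (A : automaton Sigma Q) (w : nat -> option Sigma) :
  complete A ->
  nbw_accepts (Af A) w <->
  infinitely_often (fun i => w i = None /\ nfa_accepts A (block w i)).
Proof. by move=> A_complete; split; [apply: Af_accepts_blocks | apply: blocks_Af_accepts]. Qed.

Theorem lemma5 (Sigma Q P : finType) (A : automaton Sigma Q) (B : automaton Sigma P) :
  complete A -> complete B ->
  (nfa_incl B A <-> nbw_incl (Af B) (Af A)).
Proof.
move=> A_complete B_complete; split=> [incl w | incl u u_B].
  move/(Af_acceptsE _ B_complete) => B_blocks; apply/(Af_acceptsE _ A_complete).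
  by apply: infinitely_often_sub B_blocks => i [w_i /incl].
have /incl/(Af_acceptsE _ A_complete) : nbw_accepts (Af B) (dollar_cycle u).
  apply/(Af_acceptsE _ B_complete); apply: infinitely_often_sub (dollar_cycle_dollars u).
  by move=> i u_i; rewrite dollar_cycle_block.
by move=> /(_ 0) [i _ [/dollar_cycle_block ->]].
Qed.
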